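(* Drag sum is associative (whenever the sums involved are defined, i.e. the drags are pairwise compatible), commutative ($D\oplus D'=D'\oplus D$ for compatible $D,D'$), idempotent ($D\oplus D=D$), and has the empty drag as identity element ($D\oplus\varnothing=D$).
   Context: Fix a set $\mathcal{F}$ of function symbols, each with a fixed arity, and a set $\mathcal{X}$ of variables disjoint from $\mathcal{F}$. A drag is a tuple $D=\langle V,R,L,X,S\rangle$ where: $V$ is a finite set of vertices; $R:V\to\mathbb{N}$ is a finite multiset of vertices, the roots ($v$ is rooted if $R(v)>0$); $S\subseteq V$ is the set of sprouts and $I=V\setminus S$ the set of internal vertices; $L:V\to\mathcal{F}\cup\mathcal{X}$ labels internal vertices by function symbols and sprouts by variables; $X:V\to V^*$ assigns to each vertex a list of successors whose length is the arity of its label (sprouts have no successors). If $b$ is the $k$-th element of $X(a)$, then $(a,k,b)$ is an edge with tail $a$ and head $b$. $\mathrm{pred}(v,D)$ is the number of edges with head $v$, and the indegree of $v$ is $\mathrm{In}(v,D)=\mathrm{pred}(v,D)+R(v)$. The empty drag $\varnothing$ has no vertices. Drags $D=\langle V,R,L,X,S\rangle$ and $D'=\langle V',R',L',X',S'\rangle$ are compatible if $V\cap V'$ is closed under the successor functions of both drags, $L$ and $L'$ coincide on $V\cap V'$, and every shared vertex $v$ has the same indegree in $D$ and in $D'$, this indegree being at least the total number of distinct edges of $D$ and of $D'$ with head $v$. Their sum is $D\oplus D'=\langle V\cup V',R'',L\cup L',X\cup X',S\cup S'\rangle$, where $R''(v)=R(v)-|\{\text{edges of }D'\text{ not in }D\text{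 with head }v\}|$ for $v\in V$ (for $v\in V\cap V'$ this equals $R'(v)-|\{\text{edges of }D\text{ not in }D'\text{ with head }v\}|$) and $R''(v)=R'(v)$ for $v\in V'\setminus V$. *)

From HB Require Import structures.
From mathcomp Require Import all_boot.
From mathcomp Require Import finmap.

Set Implicit Arguments.
Unset Strict Implicit.
Unset Printing Implicit Defensive.

Local Open Scope fset_scope.

Section Drags.

(* T   : the universe of vertex names (drags share vertices through it)
   sym : the function symbols F, with arity ar
   var : the variables X (disjoint from F: labels live in the sum sym + var) *)
Variables (T : choiceType) (sym var : Type) (ar : sym -> nat).

(* A drag <V, R, L, X, S>.  The functions R, L, X are total on T but only
   their values on V are meaningful (see drag_eq). *)
Record drag := Drag {
  dV : {fset T};
  dR : T -> nat;            (* roots, a multiset of vertices *)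
  dS : {fset T};
  dL : T -> sym + var;
  dX : T -> seq T
}.

Definition wf_drag (D : drag) : Prop :=
  dS D `<=` dV D /\
  forall v, v \in dV D ->
    (v \in dS D -> (exists x, dL D v = inr x) /\ dX D v = [::]) /\
    (v \notin dS D -> exists f, dL D v = inl f /\ size (dX D v) = ar f) /\
    all (fun w => w \in dV D) (dX D v).

(* The edges (a, k, b) of D: b is the k-th element of X(a) (0-based). *)
Definition edges (D : drag) : seq (T * nat * T) :=
  flatten [seq [seq (a, k, nth a (dX D a) k) | k <- iota 0 (size (dX D a))]
          | a <- dV D].

Definition is_edge (D : drag) (e : T * nat * T) : bool := e \in edges D.

Definition npred (v : T) (D : drag) : nat := count (fun e => e.2 == v) (edges D).
Definition indeg (v : T) (D : drag) : nat := npred v D + dR D v.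

Definition new_edges_to (v : T) (D D' : drag) : nat :=
  count (fun e => (e.2 == v) && ~~ is_edge D e) (edges D').

Definition distinct_edges_to (v : T) (D D' : drag) : nat :=
  size (undup [seq e <- edges D ++ edges D' | e.2 == v]).

(* Compatibility.  Besides the conditions of the paper we require that the
   successor functions agree on shared vertices, which is exactly what is
   needed for X u X' to be a function. *)
Definition compatible (D D' : drag) : Prop :=
  (forall v, v \in dV D `&` dV D' ->
     all (fun w => w \in dV D `&` dV D') (dX D v) /\
     all (fun w => w \in dV D `&` dV D') (dX D' v)) /\
  (forall v, v \in dV D `&` dV D' -> dL D v = dL D' v) /\
  (forall v, v \in dV D `&` dV D' -> dX D v = dX D' v) /\
  (forall v, v \in dV D `&` dV D' ->
     indeg v D = indeg v D' /\ distinct_edges_to v D D' <= indeg v D).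

Definition dsum (D D' : drag) : drag :=
  Drag (dV D `|` dV D')
       (fun v => if v \in dV D then dR D v - new_edges_to v D D' else dR D' v)
       (dS D `|` dS D')
       (fun v => if v \in dV D then dL D v else dL D' v)
       (fun v => if v \in dV D then dX D v else dX D' v).

Definition drag_eq (D D' : drag) : Prop :=
  dV D = dV D' /\ dS D = dS D' /\
  (forall v, v \in dV D ->
     dR D v = dR D' v /\ dL D v = dL D' v /\ dX D v = dX D' v).

(* The empty drag: no vertices (hence, no sprouts). All such drags are
   equal for drag_eq. *)
Definition is_empty_drag (D : drag) : Prop := dV D = fset0 /\ dS D = fset0.

End Drags.

From HB Require Import structures.
From mathcomp Require Import all_boot.
From mathcomp Require Import finmap.
From mathcomp Require Import zify.

(* Vertices and sprouts of a sum are
   unions, and labels and successors are read from the first summand containing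
   the vertex, so only the roots need care. Since successor lists agree on shared vertices,
   the edges of D (+) D' are the edges of D followed by the new edges of D';
   this gives associativity of the root update. For commutativity,
   R(v) - new_{D'}(v) and R'(v) - new_D(v) coincide because
   pred(v,D) + new_{D'}(v) = pred(v,D') + new_D(v) counts the distinct edges
   into v, while pred(v,D) + R(v) = pred(v,D') + R'(v) by compatibility. *)

Set Implicit Arguments.
Unset Strict Implicit.
Unset Printing Implicit Defensive.
Local Open Scope fset_scope.

Section Edges.

Variables (T : choiceType) (sym var : Type).
Implicit Types (D : drag T sym var) (e : T * nat * T).

Definition out_edges D (a : T) : seq (T * nat * T) :=
  [seq (a, k, nth a (dX D a) k) | k <- iota 0 (size (dX D a))].

Lemma edgesE D : edges D = flatten [seq out_edges D a | a <- dV D].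
Proof. by []. Qed.

Lemma mem_out_edges D a e :
  (e \in out_edges D a) =
  [&& e.1.1 == a, e.1.2 < size (dX D a) & e.2 == nth a (dX D a) e.1.2].
Proof.
apply/mapP/idP.
  by case=> k; rewrite mem_iota add0n => /andP[_ hk] ->; rewrite /= eqxx hk eqxx.
case: e => [[a' k] b] /= /and3P[/eqP-> hk /eqP->]; exists k => //.
by rewrite mem_iota add0n hk.
Qed.

Lemma mem_edges D e : (e \in edges D) = (e.1.1 \in dV D) && (e \in out_edges D e.1.1).
Proof.
rewrite edgesE; apply/flattenP/andP => [[s /mapP[a ha ->] he] | [hV he]].
  by move: (he); rewrite [_ \in out_edges D a]mem_out_edges => /and3P[/eqP -> _ _].
by exists (out_edges D e.1.1); rewrite ?map_f.
Qed.

Lemma uniq_edges D : uniq (edges D).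
Proof.
rewrite edgesE; elim: (dV D : seq T) (fset_uniq (dV D)) => //= a s IH /andP[ha hs].
rewrite cat_uniq IH // map_inj_uniq ?iota_uniq; last by move=> k1 k2 [].
rewrite andbT /=; apply/hasPn => e /flattenP[t /mapP[b hb ->]].
rewrite mem_out_edges => /and3P[/eqP eb _ _]; rewrite mem_out_edges.
by apply: contraNN ha => /and3P[/eqP ea _ _]; rewrite -ea eb.
Qed.

Lemma edges_fset0 D : dV D = fset0 -> edges D = [::].
Proof. by rewrite edgesE => ->. Qed.

Lemma out_edges_dsum D D' a :
  out_edges (dsum D D') a = if a \in dV D then out_edges D a else out_edges D' a.
Proof. by rewrite /out_edges /=; case: ifP. Qed.

Section SharedSuccessors.

Variables D D' : drag T sym var.
Hypothesis dX_shared : {in dV D `&` dV D', dX D =1 dX D'}.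

Lemma out_edges_shared a : a \in dV D -> a \in dV D' -> out_edges D' a = out_edges D a.
Proof. by move=> ha ha'; rewrite /out_edges dX_shared // in_fsetI ha ha'. Qed.

Lemma is_edge_dsum e : is_edge (dsum D D') e = is_edge D e || is_edge D' e.
Proof.
rewrite /is_edge !mem_edges out_edges_dsum /= in_fsetU.
case ha: (e.1.1 \in dV D) => //=; case ha': (e.1.1 \in dV D') => /=.
  by rewrite out_edges_shared // orbb.
by rewrite orbF.
Qed.

Lemma perm_edges_dsum :
  perm_eq (edges (dsum D D')) (edges D ++ [seq e <- edges D' | ~~ is_edge D e]).
Proof.
apply: uniq_perm; rewrite ?uniq_edges //.
  rewrite cat_uniq uniq_edges filter_uniq ?uniq_edges // andbT.
  by apply/hasPn => e; rewrite mem_filter => /andP[].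
move=> e; rewrite mem_cat mem_filter -!/(is_edge _ e) is_edge_dsum.
by case: (is_edge D e).
Qed.

Lemma count_edges_dsum (p : pred (T * nat * T)) :
  count p (edges (dsum D D')) =
  (count p (edges D) + count (fun e => p e && ~~ is_edge D e) (edges D'))%N.
Proof. by rewrite (permP perm_edges_dsum) count_cat count_filter. Qed.

End SharedSuccessors.

End Edges.

Section Sums.

Variables (T : choiceType) (sym var : Type) (ar : sym -> nat).
Implicit Types (D : drag T sym var) (e : T * nat * T) (v : T).

Lemma head_in_dV D e : wf_drag ar D -> e \in edges D -> e.2 \in dV D.
Proof.
case=> _ wfD; rewrite mem_edges mem_out_edges => /andP[ha /and3P[_ hk /eqP ->]].
by have [_ [_ /allP]] := wfD _ ha; apply; rewrite mem_nth.
Qed.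

Lemma new_edges_to_notin D D' v :
  wf_drag ar D' -> v \notin dV D' -> new_edges_to v D D' = 0.
Proof.
move=> wfD' hv; apply/eqP; rewrite -leqn0 leqNgt -has_count; apply/hasPn => e he.
by apply: contraNN hv => /andP[/eqP <- _]; apply: head_in_dV he.
Qed.

Lemma new_edges_toxx D v : new_edges_to v D D = 0.
Proof.
apply/eqP; rewrite -leqn0 leqNgt -has_count; apply/hasPn => e he.
by rewrite /is_edge he andbF.
Qed.

Lemma new_edges_to_fset0 D D' v : dV D' = fset0 -> new_edges_to v D D' = 0.
Proof. by rewrite /new_edges_to => /edges_fset0 ->. Qed.

Lemma new_edges_to_dsumr D1 D2 D3 v :
  {in dV D1 `&` dV D2, dX D1 =1 dX D2} -> {in dV D2 `&` dV D3, dX D2 =1 dX D3} ->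
  new_edges_to v D1 (dsum D2 D3) =
  (new_edges_to v D1 D2 + new_edges_to v (dsum D1 D2) D3)%N.
Proof.
move=> hX12 hX23; rewrite /new_edges_to count_edges_dsum //; congr (_ + _)%N.
by apply: eq_count => e; rewrite is_edge_dsum // negb_or !andbA.
Qed.

Lemma new_edges_to_dsuml_notin D1 D2 D3 v :
  wf_drag ar D1 -> {in dV D1 `&` dV D2, dX D1 =1 dX D2} -> v \notin dV D1 ->
  new_edges_to v (dsum D1 D2) D3 = new_edges_to v D2 D3.
Proof.
move=> wfD1 hX12 hv; apply: eq_in_count => e he.
rewrite is_edge_dsum //; case: eqP => //= he2.
suff /negbTE -> : ~~ is_edge D1 e by [].
by apply: contraNN hv => /(head_in_dV wfD1); rewrite he2.
Qed.

Lemma distinct_edges_toE D D' v :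
  distinct_edges_to v D D' = (new_edges_to v D' D + npred v D')%N.
Proof.
rewrite /distinct_edges_to filter_cat undup_cat size_cat size_filter.
rewrite !undup_id ?filter_uniq ?uniq_edges // count_filter size_filter.
by congr (_ + _)%N; apply: eq_count => e /=; rewrite mem_filter andbC; case: eqP.
Qed.

Lemma distinct_edges_toC D D' v : distinct_edges_to v D D' = distinct_edges_to v D' D.
Proof.
apply: perm_size; apply: uniq_perm; rewrite ?undup_uniq // => e.
by rewrite !mem_undup !mem_filter !mem_cat orbC.
Qed.

(* The bound says that the edges of D' into v that are new for D are at most
   R(v), so the truncated subtraction is exact. *)
Lemma root_update_sym D D' v :
  indeg v D = indeg v D' -> distinct_edges_to v D D' <= indeg v D ->
  dR D v - new_edges_to v D D' = dR D' v - new_edges_to v D' D.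
Proof.
have := distinct_edges_toC D D' v; rewrite !distinct_edges_toE /indeg; lia.
Qed.

End Sums.

Section Laws.

Variables (T : choiceType) (sym var : Type) (ar : sym -> nat).
Implicit Types D : drag T sym var.

Lemma dsumA D1 D2 D3 :
  wf_drag ar D1 -> compatible D1 D2 -> compatible D2 D3 ->
  drag_eq (dsum (dsum D1 D2) D3) (dsum D1 (dsum D2 D3)).
Proof.
move=> wfD1 [_ [_ [hX12 _]]] [_ [_ [hX23 _]]].
split; first by rewrite /= fsetUA.
split=> [|v _ /=]; first by rewrite /= fsetUA.
rewrite !in_fsetU (new_edges_to_dsumr _ hX12 hX23).
case h1: (v \in dV D1) => /=; first by rewrite subnDA.
by case: (v \in dV D2); rewrite //= (new_edges_to_dsuml_notin _ wfD1 hX12) ?h1.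
Qed.

Lemma dsumC D D' :
  wf_drag ar D -> wf_drag ar D' -> compatible D D' -> drag_eq (dsum D D') (dsum D' D).
Proof.
move=> wfD wfD' [_ [hL [hX hI]]].
split; first by rewrite /= fsetUC.
split=> [|v]; first by rewrite /= fsetUC.
rewrite /= in_fsetU; case h: (v \in dV D); case h': (v \in dV D') => //= _.
- have hv : v \in dV D `&` dV D' by rewrite in_fsetI h h'.
  have [hIn hdist] := hI v hv.
  by rewrite root_update_sym // hL // hX.
- by rewrite (new_edges_to_notin _ wfD') ?h' ?subn0.
- by rewrite (new_edges_to_notin _ wfD) ?h ?subn0.
Qed.

Lemma dsumxx D : drag_eq (dsum D D) D.
Proof.
split; first by rewrite /= fsetUid.
split=> [|v]; first by rewrite /= fsetUid.
by rewrite /= in_fsetU orbb => ->; rewrite new_edges_toxx subn0.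
Qed.

Lemma dsum0 D E : is_empty_drag E -> drag_eq (dsum D E) D.
Proof.
move=> [hV hS]; split; first by rewrite /= hV fsetU0.
split=> [|v]; first by rewrite /= hS fsetU0.
by rewrite /= in_fsetU hV in_fset0 orbF => ->; rewrite new_edges_to_fset0 ?subn0.
Qed.

End Laws.

Theorem mainTheorem11 (T : choiceType) (sym var : Type) (ar : sym -> nat) :
  (forall D1 D2 D3 : drag T sym var,
     wf_drag ar D1 -> wf_drag ar D2 -> wf_drag ar D3 ->
     compatible D1 D2 -> compatible D2 D3 -> compatible D1 D3 ->
     drag_eq (dsum (dsum D1 D2) D3) (dsum D1 (dsum D2 D3))) /\
  (forall D D' : drag T sym var,
     wf_drag ar D -> wf_drag ar D' -> compatible D D' ->
     drag_eq (dsum D D') (dsum D' D)) /\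
  (forall D : drag T sym var, wf_drag ar D -> drag_eq (dsum D D) D) /\
  (forall D E : drag T sym var,
     wf_drag ar D -> wf_drag ar E -> is_empty_drag E -> drag_eq (dsum D E) D).
Proof.
split; [|split; [|split]].
- by move=> D1 D2 D3 wfD1 _ _ c12 c23 _; apply: dsumA wfD1 c12 c23.
- by move=> D D' wfD wfD' cDD'; apply: dsumC wfD wfD' cDD'.
- by move=> D _; apply: dsumxx.
- by move=> D E _ _; apply: dsum0.
Qed.
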